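(* Let $\kappa$ be a regular infinite cardinal and $\mu$ a singular cardinal with $\mathrm{cf}(\mu)=\kappa$. (1) If $\lambda$ is a cardinal with $\lambda<2^\lambda<\mu$, then $\lambda<\mathrm{non}(\mathcal M_\kappa({}^{\mu}2,\kappa))$. Consequently, if $\mu$ is a strong limit cardinal, then $\mu^+\le\mathrm{non}(\mathcal M_\kappa({}^{\mu}2,\kappa))$. (2) If $\lambda$ is a regular cardinal with $\kappa<\lambda<\mu\le 2^\lambda$ and there exists a ${<}\kappa^+$-independent family $\mathcal X\subseteq[\lambda]^\lambda$ of cardinality $\mu$, then $\mathrm{non}(\mathcal M_\kappa({}^{\mu}2,\kappa))\le\lambda$.
   Context: For ordinals $\delta,\rho$, ${}^{\delta}\rho$ is the set of functions $\delta\to\rho$; for a partial function $s\colon\delta\rightharpoonup\rho$, $[s]=\{f\in{}^{\delta}\rho: s\subseteq f\}$. The ${<}\kappa$-box topology on ${}^{\delta}\rho$ has base $\{[s]: |\mathrm{dom}(s)|<\kappa\}$; $(X,\kappa)$ denotes $X$ with it. A set is $\kappa$-meagre if it is a union of at most $\kappa$ nowhere dense sets; $\mathcal M_\kappa(X,\tau)$ is the ideal of $\kappa$-meagre subsets; $\mathrm{non}(\mathcal I)$ is the least size of a subset of the space not in $\mathcal I$. For a regular cardinal $\lambda$, a family $\mathcal X\subseteq[\lambda]^\lambda$ is ${<}\nu$-independent if for all disjoint $A,B\in[\mathcal X]^{<\nu}$ we have $|\bigcap A\setminus\bigcup B|=\lambda$. *)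

(* Cardinals are represented by types (up to bijection);
   cardinal comparisons by injections/bijections (choice is available). *)
From Stdlib Require Import Classical.

Definition set (T : Type) := T -> Prop.

Definition le_card (A B : Type) : Prop :=
  exists f : A -> B, forall x y, f x = f y -> x = y.
Definition lt_card (A B : Type) : Prop := le_card A B /\ ~ le_card B A.
Definition eq_card (A B : Type) : Prop :=
  exists f : A -> B, (forall x y, f x = f y -> x = y) /\ (forall b, exists a, f a = b).

Definition sub {T : Type} (S : set T) : Type := {x : T | S x}.

Definition infinite_card (A : Type) : Prop := le_card nat A.

(* cf(|M|) = |K|  (for infinite M): |K| is the least cardinality of an index
   set I such that M is a union of I-many subsets each of size < |M|. *)
Definition covered_by_small (M I : Type) : Prop :=
  exists F : I -> set M,
    (forall i, lt_card (sub (F i)) M) /\ (forall x : M, exists i, F i x).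

Definition cof_eq (M K : Type) : Prop :=
  covered_by_small M K /\ (forall I : Type, lt_card I K -> ~ covered_by_small M I).

Definition regular_card (K : Type) : Prop := infinite_card K /\ cof_eq K K.

Definition strong_limit (M : Type) : Prop :=
  forall L : Type, lt_card L M -> lt_card (L -> bool) M.

(* The <kappa-box topology on ^M 2 (kappa = |K|): basic open sets are
   [s] = {f | s ⊆ f} for partial functions s with |dom s| < kappa. *)
Definition box_open (K M : Type) (U : set (M -> bool)) : Prop :=
  forall f, U f -> exists D : set M, lt_card (sub D) K /\
    (forall g : M -> bool, (forall x, D x -> g x = f x) -> U g).

Definition box_closure (K M : Type) (N : set (M -> bool)) : set (M -> bool) :=
  fun f => forall U, box_open K M U -> U f -> exists g, U g /\ N g.

Definition box_nowhere_dense (K M : Type) (N : set (M -> bool)) : Prop :=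
  forall U, box_open K M U -> (forall f, U f -> box_closure K M N f) ->
    forall f, ~ U f.

Definition kappa_meagre (K M : Type) (A : set (M -> bool)) : Prop :=
  exists (I : Type) (N : I -> set (M -> bool)), le_card I K /\
    (forall i, box_nowhere_dense K M (N i)) /\
    (forall f, A f <-> exists i, N i f).

(* lambda < non(M_kappa(^mu 2, kappa)):
   every subset of size <= lambda is kappa-meagre *)
Definition lt_non (K M L : Type) : Prop :=
  forall S : set (M -> bool), le_card (sub S) L -> kappa_meagre K M S.

(* non(M_kappa(^mu 2, kappa)) <= lambda:
   some subset of size <= lambda is not kappa-meagre *)
Definition non_le (K M L : Type) : Prop :=
  exists S : set (M -> bool), le_card (sub S) L /\ ~ kappa_meagre K M S.

(* <nu-independence with nu = kappa^+ : for all disjoint A, B ⊆ X of size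
   <= kappa (i.e. < kappa^+), |∩A \ ∪B| = lambda.  ∩∅ = lambda. *)
Definition independent_le (K L : Type) (X : set (set L)) : Prop :=
  forall A B : set (set L),
    (forall Y, A Y -> X Y) -> (forall Y, B Y -> X Y) ->
    (forall Y, A Y -> B Y -> False) ->
    le_card (sub A) K -> le_card (sub B) K ->
    eq_card (sub (fun x : L => (forall Y, A Y -> Y x) /\ ~ (exists Y, B Y /\ Y x))) L.

From Stdlib Require Import Classical ClassicalEpsilon FunctionalExtensionality ProofIrrelevance PropExtensionality.
From Stdlib Require Import Wellfounded.
From mathcomp Require ssreflect ssrbool eqtype boolp wochoice.

(* (1) A set S of functions M -> bool consists of functions constant on the classes of
   "x ~ y iff all members of S agree at x and y".  There are at most 2^|S| classes, so
   if 2^|S| < |M| every set of fewer than kappa coordinates misses two equivalent points,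
   and prescribing different values there shows that this set is nowhere dense.  Sets of
   size <= kappa are unions of singletons.  If mu is a strong limit of cofinality kappa,
   a set of size mu splits into kappa pieces of size < mu, each handled as before.
   (2) The <kappa-box topology is Baire in a strong form: given kappa nowhere dense sets,
   a recursion of length kappa (regularity of kappa keeps the limit stages small) yields a
   partial function s with |dom s| <= kappa all of whose extensions avoid them.  An
   independent family (Y_xi)_(xi < mu) gives lambda functions xi |-> [l ∈ Y_xi], and
   independence provides one extending s, so they form a non-meagre set. *)

Definition strict_well_order {T : Type} (lt : T -> T -> Prop) : Prop :=
  well_founded lt /\ forall x y, x <> y -> lt x y \/ lt y x.

Definition segment {T : Type} (lt : T -> T -> Prop) (x : T) : set T := fun y => lt y x.

Module WellOrdering.
Import ssreflect ssrbool eqtype boolp wochoice.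

Lemma strict_well_order_exists (T : Type) : exists lt : T -> T -> Prop, strict_well_order lt.
Proof.
have [R wR] := well_ordering_principle {classic T}.
have wc : wo_chain R (fun _ => true) by move=> A _; apply: wR.
have Ranti := wo_chain_antisymmetric wc.
exists (fun x y : T => R x y /\ x <> y); split.
- move=> x; apply: NNPP => nAx.
  pose A : pred {classic T} := fun w => `[< ~ Acc (fun x y : T => R x y /\ x <> y) w >].
  have [m [[] mA lb] _] := wR A (ex_intro _ x (asboolT nAx)).
  move: mA => /asboolP; apply; constructor => y [Rym nym].
  apply: NNPP => nAy; apply: nym; apply: Ranti => //.
  by rewrite Rym (lb y (asboolT nAy)).
- move=> x y nxy; case/orP: (wo_chainW wc (x:=x) (y:=y) isT isT) => Rxy; [left|right]; split => //.
  by move=> exy; apply: nxy.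
Qed.
End WellOrdering.
Import WellOrdering.

Lemma sub_inj {T : Type} (P : set T) (x y : sub P) : proj1_sig x = proj1_sig y -> x = y.
Proof. apply eq_sig_hprop; intros; apply proof_irrelevance. Qed.

Definition dec (P : Prop) : bool := if excluded_middle_informative P then true else false.

Lemma dec_true (P : Prop) : dec P = true <-> P.
Proof. unfold dec; destruct (excluded_middle_informative P); split; easy. Qed.

Lemma dec_false (P : Prop) : dec P = false <-> ~ P.
Proof. unfold dec; destruct (excluded_middle_informative P); split; easy. Qed.

Lemma dec_iff (P Q : Prop) : dec P = dec Q -> (P <-> Q).
Proof. unfold dec; destruct (excluded_middle_informative P), (excluded_middle_informative Q); easy. Qed.

Lemma le_card_refl (A : Type) : le_card A A.
Proof. exists (fun x => x); auto. Qed.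

Lemma le_card_trans (A B C : Type) : le_card A B -> le_card B C -> le_card A C.
Proof. intros [f hf] [g hg]; exists (fun x => g (f x)); auto. Qed.

Lemma le_lt_card_trans (A B C : Type) : le_card A B -> lt_card B C -> lt_card A C.
Proof.
  intros HAB [HBC nCB]; split; [eapply le_card_trans; eauto|].
  intro HCA; apply nCB; eapply le_card_trans; eauto.
Qed.

Lemma le_card_empty (A B : Type) : ~ inhabited A -> le_card A B.
Proof. intro nA; exists (fun a => False_rect _ (nA (inhabits a))); intro a; contradiction (nA (inhabits a)). Qed.

Lemma le_card_sub {T : Type} (A B : set T) :
  (forall x, A x -> B x) -> le_card (sub A) (sub B).
Proof.
  intro AB; exists (fun a => exist B (proj1_sig a) (AB _ (proj2_sig a))).
  intros a a' E; apply sub_inj; exact (f_equal (@proj1_sig _ _) E).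
Qed.

Lemma le_card_subT {T : Type} (A : set T) : le_card (sub A) T.
Proof. exists (@proj1_sig _ _); apply sub_inj. Qed.

Lemma le_card_rel (A B : Type) (R : A -> B -> Prop) :
  (forall a, exists b, R a b) -> (forall a a' b, R a b -> R a' b -> a = a') -> le_card A B.
Proof.
  intros Rtot Rinj.
  exists (fun a => proj1_sig (constructive_indefinite_description _ (Rtot a))).
  intros a a'.
  destruct (constructive_indefinite_description _ (Rtot a)) as [b Hb].
  destruct (constructive_indefinite_description _ (Rtot a')) as [b' Hb'].
  simpl; intros <-; eauto.
Qed.

Lemma wf_recursion (T X : Type) (lt : T -> T -> Prop) (d : X) (G : T -> (T -> X) -> X) :
  well_founded lt ->
  (forall x f g, (forall y, lt y x -> f y = g y) -> G x f = G x g) ->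
  exists h : T -> X, forall x, h x = G x h.
Proof.
  intros wf Gext.
  pose (F := fun x (rec : forall y, lt y x -> X) => G x (fun y =>
     match excluded_middle_informative (lt y x) with left p => rec y p | right _ => d end)).
  exists (Fix wf (fun _ => X) F); intro x.
  rewrite Fix_eq.
  - apply Gext; intros y Hy.
    destruct (excluded_middle_informative (lt y x)); [reflexivity|contradiction].
  - intros z f g Hfg; unfold F; f_equal; extensionality y.
    destruct (excluded_middle_informative (lt y z)); auto.
Qed.

(* Enumerate [B] along [lt], always picking a value not used before: either the
   enumeration never gets stuck, or some initial segment already exhausts [B]. *)
Lemma le_card_or_segment (A B : Type) (lt : A -> A -> Prop) :
  strict_well_order lt -> le_card A B \/ exists a, le_card B (sub (segment lt a)).
Proof.
  intros [wf tot].
  destruct (classic (inhabited B)) as [iB|nB].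
  2:{ destruct (classic (inhabited A)) as [[a]|nA].
      - right; exists a; apply le_card_empty; exact nB.
      - left; apply le_card_empty; exact nA. }
  pose (fresh := fun a (h : A -> B) b => forall a', lt a' a -> h a' <> b).
  destruct (wf_recursion A B lt (epsilon iB (fun _ => True))
              (fun a h => epsilon iB (fresh a h)) wf) as [h Hh].
  { intros a f g Hfg; f_equal; extensionality b; apply propositional_extensionality.
    unfold fresh; split; intros H a' Ha'; [rewrite <- Hfg|rewrite Hfg]; auto. }
  assert (h_fresh : forall a, (exists b, fresh a h b) -> fresh a h (h a)).
  { intros a Ex; rewrite (Hh a); apply epsilon_spec; exact Ex. }
  destruct (classic (forall a, exists b, fresh a h b)) as [Hall|Hn].
  - left; exists h; intros x y E; apply NNPP; intro nxy.
    destruct (tot x y nxy) as [H|H].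
    + exact (h_fresh y (Hall y) x H E).
    + exact (h_fresh x (Hall x) y H (eq_sym E)).
  - right; apply not_all_ex_not in Hn; destruct Hn as [a Ha]; exists a.
    apply le_card_rel with (R := fun b (s : sub (segment lt a)) => h (proj1_sig s) = b).
    + intro b; apply NNPP; intro H; apply Ha; exists b; intros a' Ha' E.
      apply H; exists (exist _ a' Ha'); exact E.
    + intros; congruence.
Qed.

Lemma le_card_total (A B : Type) : le_card A B \/ le_card B A.
Proof.
  destruct (strict_well_order_exists A) as [lt Hlt].
  destruct (le_card_or_segment A B lt Hlt) as [H|[a H]]; [left; exact H|right].
  eapply le_card_trans; [exact H|apply le_card_subT].
Qed.

Lemma not_le_card_lt (A B : Type) : ~ le_card B A -> lt_card A B.
Proof. intro nBA; split; [destruct (le_card_total A B); tauto|exact nBA]. Qed.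

Lemma nat_pigeonhole3 {A : Type} (e : nat -> A) (x y : A) :
  (forall n m, e n = e m -> n = m) -> exists n, e n <> x /\ e n <> y.
Proof.
  intro e_inj; apply NNPP; intro H.
  assert (two : forall n, e n = x \/ e n = y)
    by (intro n; apply NNPP; intro; apply H; exists n; tauto).
  destruct (two 0), (two 1), (two 2);
    first [ discriminate (e_inj 0 1 ltac:(congruence))
          | discriminate (e_inj 0 2 ltac:(congruence))
          | discriminate (e_inj 1 2 ltac:(congruence)) ].
Qed.

Lemma lt_card_of_le_bool (A K : Type) : infinite_card K -> le_card A bool -> lt_card A K.
Proof.
  intros [e e_inj] HA; split.
  - eapply le_card_trans; [exact HA|].
    exists (fun b : bool => e (if b then 1 else 0)); intros [] [] E; auto;
      discriminate (e_inj _ _ E).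
  - intros HKA; destruct (le_card_trans _ _ _ (ex_intro _ e e_inj)
                           (le_card_trans _ _ _ HKA HA)) as [f f_inj].
    destruct (nat_pigeonhole3 f true false f_inj) as [n [Ht Hf]]; destruct (f n); auto.
Qed.

Lemma le_card_pow (A B : Type) : le_card A B -> le_card (A -> bool) (B -> bool).
Proof.
  intros [f f_inj]; exists (fun p b => dec (exists a, f a = b /\ p a = true)).
  assert (Hf : forall p a, dec (exists a', f a' = f a /\ p a' = true) = p a).
  { intros p a; destruct (p a) eqn:Hpa.
    - apply dec_true; eauto.
    - apply dec_false; intros [a' [E Ha']]; apply f_inj in E; congruence. }
  intros p q E; extensionality a; rewrite <- (Hf p a), <- (Hf q a).
  exact (equal_f E (f a)).
Qed.

Lemma le_card_option (A : Type) : infinite_card A -> le_card (option A) A.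
Proof.
  intros [e e_inj].
  apply le_card_rel with (R := fun o a => match o with
     | None => a = e 0
     | Some x => (exists n, e n = x /\ a = e (S n)) \/ ((forall n, e n <> x) /\ a = x) end).
  - intros [x|]; [|eauto].
    destruct (classic (exists n, e n = x)) as [[n Hn]|Hn]; eauto.
    exists x; right; split; auto; intros n Hn'; apply Hn; eauto.
  - intros [x|] [y|] b Hx Hy; try reflexivity.
    + f_equal; destruct Hx as [[n [Ex Eb]]|[Nx Eb]], Hy as [[m [Ey Eb']]|[Ny Eb']].
      * rewrite Eb in Eb'; apply e_inj in Eb'; congruence.
      * contradiction (Ny (S n)); congruence.
      * contradiction (Nx (S m)); congruence.
      * congruence.
    + destruct Hx as [[n [_ E]]|[Nx E]]; rewrite E in Hy.
      * discriminate (e_inj _ _ Hy).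
      * contradiction (Nx 0); congruence.
    + destruct Hy as [[n [_ E]]|[Ny E]]; rewrite E in Hx.
      * discriminate (e_inj _ _ Hx).
      * contradiction (Ny 0); congruence.
Qed.

Lemma le_card_sum (A A' B B' : Type) :
  le_card A A' -> le_card B B' -> le_card (A + B) (A' + B').
Proof.
  intros [f f_inj] [g g_inj].
  exists (fun s => match s with inl a => inl (f a) | inr b => inr (g b) end).
  intros [a|b] [a'|b'] E; try discriminate; injection E; intros; f_equal; auto.
Qed.

(* Singletons and co-singletons; they are distinct because [A] has three points. *)
Lemma le_card_sum_pow (A : Type) : infinite_card A -> le_card (A + A) (A -> bool).
Proof.
  intros [e e_inj].
  exists (fun s => match s with
           | inl x => fun z => dec (z = x) | inr x => fun z => dec (z <> x) end).
  intros [x|x] [y|y] E.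
  - f_equal; apply (dec_iff _ _ (equal_f E x)); reflexivity.
  - destruct (nat_pigeonhole3 e x y e_inj) as [n [nx ny]].
    contradiction nx; apply (dec_iff _ _ (equal_f E (e n))); exact ny.
  - destruct (nat_pigeonhole3 e x y e_inj) as [n [nx ny]].
    contradiction ny; apply (dec_iff _ _ (equal_f E (e n))); exact nx.
  - f_equal; apply NNPP; intro nxy.
    apply (dec_iff _ _ (equal_f E x)); [exact nxy|reflexivity].
Qed.

Lemma lt_card_sum_strong_limit (A K M : Type) : infinite_card K -> lt_card K M ->
  strong_limit M -> lt_card A M -> lt_card (A + K) M.
Proof.
  intros Kinf HKM SL HAM; destruct (le_card_total A K) as [HAK|HKA].
  - eapply le_lt_card_trans; [|exact (SL K HKM)].
    eapply le_card_trans; [apply le_card_sum; [exact HAK|apply le_card_refl]|].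
    apply le_card_sum_pow; exact Kinf.
  - eapply le_lt_card_trans; [|exact (SL A HAM)].
    eapply le_card_trans; [apply le_card_sum; [apply le_card_refl|exact HKA]|].
    apply le_card_sum_pow; eapply le_card_trans; [exact Kinf|exact HKA].
Qed.

Lemma regular_union_lt (K J T : Type) (G : J -> set T) : regular_card K -> lt_card J K ->
  (forall j, ~ le_card K (sub (G j))) -> ~ le_card K (sub (fun x => exists j, G j x)).
Proof.
  intros [_ [_ cofK]] HJ HG [e e_inj]; apply (cofK J HJ).
  exists (fun j k => G j (proj1_sig (e k))); split.
  - intro j; apply not_le_card_lt; intros [f f_inj]; apply (HG j).
    exists (fun k => exist _ (proj1_sig (e (proj1_sig (f k)))) (proj2_sig (f k))).
    intros x y E; apply f_inj, sub_inj, e_inj, sub_inj; exact (f_equal (@proj1_sig _ _) E).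
  - intro k; destruct (proj2_sig (e k)) as [j Hj]; exists j; exact Hj.
Qed.

Lemma box_open_cylinder (K M : Type) (D : set M) (f : M -> bool) :
  lt_card (sub D) K -> box_open K M (fun g => forall x, D x -> g x = f x).
Proof. intros HD g Hg; exists D; split; [exact HD|]; intros h Hh x Dx; rewrite Hh; auto. Qed.

Lemma lt_card_pair (K M : Type) (x y : M) :
  infinite_card K -> lt_card (sub (fun z => z = x \/ z = y)) K.
Proof.
  intro Kinf; apply lt_card_of_le_bool; [exact Kinf|].
  exists (fun s => dec (proj1_sig s = x)); intros [a Ha] [b Hb] E; apply sub_inj; simpl in *.
  apply dec_iff in E; destruct Ha, Hb; subst;
    first [reflexivity | apply E; reflexivity | symmetry; apply E; reflexivity].
Qed.

Lemma exists_outside_lt_card (K M : Type) (D : set M) :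
  lt_card K M -> lt_card (sub D) K -> exists x, ~ D x.
Proof.
  intros [_ nMK] [HD _]; apply NNPP; intro Hn; apply nMK.
  eapply le_card_trans; [|exact HD].
  exists (fun x => exist D x (NNPP _ (fun nDx => Hn (ex_intro _ x nDx)))).
  intros x y E; exact (f_equal (@proj1_sig _ _) E).
Qed.

Lemma box_nowhere_dense_of_pairs (K M : Type) (N : set (M -> bool)) : infinite_card K ->
  (forall D : set M, lt_card (sub D) K -> exists x y a b,
     ~ D x /\ ~ D y /\ (x = y -> a = b) /\ forall h, h x = a -> h y = b -> ~ N h) ->
  box_nowhere_dense K M N.
Proof.
  intros Kinf HN U HU Ucl f Uf; destruct (HU f Uf) as [D [HD HDU]].
  destruct (HN D HD) as [x [y [a [b [nDx [nDy [xya Nxy]]]]]]].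
  pose (g := fun z => if dec (z = x) then a else if dec (z = y) then b else f z).
  assert (gx : g x = a) by (unfold g; rewrite (proj2 (dec_true _) eq_refl); reflexivity).
  assert (gy : g y = b).
  { destruct (classic (y = x)) as [E|nyx]; [rewrite E, gx; exact (xya (eq_sym E))|].
    unfold g; rewrite (proj2 (dec_false _) nyx), (proj2 (dec_true (y = y)) eq_refl).
    reflexivity. }
  assert (Ug : U g).
  { apply HDU; intros z Dz; unfold g.
    rewrite (proj2 (dec_false (z = x))), (proj2 (dec_false (z = y))); congruence. }
  destruct (Ucl g Ug _ (box_open_cylinder K M _ g (lt_card_pair K M x y Kinf)))
    as [h [Hh Nh]]; [auto|].
  exact (Nxy h (eq_trans (Hh x (or_introl eq_refl)) gx)
                (eq_trans (Hh y (or_intror eq_refl)) gy) Nh).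
Qed.

Lemma box_nowhere_dense_subset (K M : Type) (N N' : set (M -> bool)) :
  (forall g, N g -> N' g) -> box_nowhere_dense K M N' -> box_nowhere_dense K M N.
Proof.
  intros NN' HN' U HU Ucl; apply (HN' U HU); intros f Uf W HW Wf.
  destruct (Ucl f Uf W HW Wf) as [g [Wg Ng]]; eauto.
Qed.

Lemma box_nowhere_dense_empty (K M : Type) : box_nowhere_dense K M (fun _ => False).
Proof. intros U HU Ucl f Uf; destruct (Ucl f Uf U HU Uf) as [g [_ []]]. Qed.

Lemma box_nowhere_dense_singleton (K M : Type) (f0 : M -> bool) :
  infinite_card K -> lt_card K M -> box_nowhere_dense K M (fun g => g = f0).
Proof.
  intros Kinf HKM; apply box_nowhere_dense_of_pairs; [exact Kinf|]; intros D HD.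
  destruct (exists_outside_lt_card K M D HKM HD) as [x nDx].
  exists x, x, (negb (f0 x)), (negb (f0 x)); repeat split; auto.
  intros h hx _ ->; destruct (f0 x); discriminate.
Qed.

Definition class_constant {M : Type} (V : set (M -> bool)) : set (M -> bool) :=
  fun g => forall x y, (forall v, V v -> v x = v y) -> g x = g y.

Lemma class_constant_self {M : Type} (V : set (M -> bool)) g : V g -> class_constant V g.
Proof. intros Vg x y H; exact (H g Vg). Qed.

(* If there were no such pair, every point outside [D] would be determined by its
   column [(v x)_(v in V)], while points of [D] can be coded by points of [V]; so [M]
   would inject into [option V -> bool], which is no larger than [V -> bool]. *)
Lemma exists_equivalent_pair_outside (K M : Type) (V : set (M -> bool)) (D : set M) :
  infinite_card K -> le_card K (sub V) -> lt_card (sub V -> bool) M -> lt_card (sub D) K ->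
  exists x y, ~ D x /\ ~ D y /\ x <> y /\ forall v, V v -> v x = v y.
Proof.
  intros [e e_inj] [t t_inj] [_ nMV] [[d d_inj] _]; apply NNPP; intro Hn; apply nMV.
  assert (Vinf : infinite_card (sub V))
    by (exists (fun n => t (e n)); intros n m E; apply e_inj, t_inj, E).
  pose (code := fun x => match excluded_middle_informative (D x) with
               | left p => t (d (exist _ x p)) | right _ => t (e 0) end).
  assert (code_inj : forall x y, D x -> D y -> code x = code y -> x = y).
  { intros x y Dx Dy; unfold code.
    destruct (excluded_middle_informative (D x)); [|contradiction].
    destruct (excluded_middle_informative (D y)); [|contradiction].
    intro E; apply t_inj, d_inj in E; exact (f_equal (@proj1_sig _ _) E). }
  eapply le_card_trans; [|apply le_card_pow, le_card_option; exact Vinf].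
  exists (fun x (o : option (sub V)) => match o with
           | None => dec (D x)
           | Some v => if dec (D x) then dec (v = code x) else proj1_sig v x end).
  intros x y Exy; pose proof (dec_iff _ _ (equal_f Exy None)) as Dxy; simpl in Dxy.
  destruct (classic (D x)) as [Dx|nDx].
  - assert (Dy : D y) by tauto.
    assert (E1 := equal_f Exy (Some (code x))); simpl in E1.
    rewrite (proj2 (dec_true _) Dx), (proj2 (dec_true _) Dy) in E1.
    apply code_inj; auto; apply (dec_iff _ _ E1); reflexivity.
  - assert (nDy : ~ D y) by tauto.
    apply NNPP; intro nxy; apply Hn; exists x, y; repeat split; auto.
    intros v Vv; assert (E1 := equal_f Exy (Some (exist _ v Vv))); simpl in E1.
    rewrite (proj2 (dec_false _) nDx), (proj2 (dec_false _) nDy) in E1; exact E1.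
Qed.

Lemma box_nowhere_dense_class_constant (K M : Type) (V : set (M -> bool)) :
  infinite_card K -> le_card K (sub V) -> lt_card (sub V -> bool) M ->
  box_nowhere_dense K M (class_constant V).
Proof.
  intros Kinf HKV HVM; apply box_nowhere_dense_of_pairs; [exact Kinf|]; intros D HD.
  destruct (exists_equivalent_pair_outside K M V D Kinf HKV HVM HD)
    as [x [y [nDx [nDy [nxy Vxy]]]]].
  exists x, y, true, false; repeat split; auto.
  - intro; contradiction.
  - intros h hx hy Ch; rewrite (Ch x y Vxy) in hx; congruence.
Qed.

Lemma kappa_meagre_of_cover (K M I : Type) (N : I -> set (M -> bool)) (A : set (M -> bool)) :
  le_card I K -> (forall i, box_nowhere_dense K M (N i)) ->
  (forall f, A f -> exists i, N i f) -> kappa_meagre K M A.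
Proof.
  intros HI HN cover; exists I, (fun i g => A g /\ N i g); repeat split.
  - exact HI.
  - intro i; apply box_nowhere_dense_subset with (N' := N i); [tauto|apply HN].
  - intro Af; destruct (cover f Af) as [i Ni]; eauto.
  - intros [i [Af _]]; exact Af.
Qed.

(* A set of size at most [K] is a union of singletons; a larger one consists of
   functions constant on the classes it induces itself. *)
Lemma lt_non_of_pow_lt (K M L : Type) :
  infinite_card K -> lt_card K M -> lt_card (L -> bool) M -> lt_non K M L.
Proof.
  intros Kinf HKM HLM S HS; destruct (le_card_total (sub S) K) as [HSK|HKS].
  - apply kappa_meagre_of_cover with (I := sub S) (N := fun s g => g = proj1_sig s).
    + exact HSK.
    + intro s; apply box_nowhere_dense_singleton; assumption.
    + intros f Sf; exists (exist _ f Sf); reflexivity.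
  - apply kappa_meagre_of_cover with (I := unit) (N := fun _ => class_constant S).
    + destruct Kinf as [e _]; exists (fun _ => e 0); intros [] [] _; reflexivity.
    + intros _; apply box_nowhere_dense_class_constant; try assumption.
      eapply le_lt_card_trans; [apply le_card_pow; exact HS|exact HLM].
    + intros f Sf; exists tt; apply class_constant_self; exact Sf.
Qed.

(* Split [S] along a cover of [M] by [K] small pieces.  Each piece, padded with the
   indicator functions of [K] points to reach size >= [K], still has size below [M],
   hence so has its power set. *)
Lemma lt_non_of_strong_limit (K M : Type) :
  infinite_card K -> lt_card K M -> covered_by_small M K -> strong_limit M -> lt_non K M M.
Proof.
  intros Kinf HKM [F [HF cover]] SL S [j j_inj].
  destruct (proj1 HKM) as [iota iota_inj].
  pose (delta := fun k x => dec (x = iota k)).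
  assert (delta_inj : forall k k', delta k = delta k' -> k = k').
  { intros k k' E; apply iota_inj, (dec_iff _ _ (equal_f E (iota k))); reflexivity. }
  pose (V := fun k g => (exists Sg : S g, F k (j (exist _ g Sg))) \/ exists k', g = delta k').
  apply kappa_meagre_of_cover with (I := K) (N := fun k => class_constant (V k)).
  - apply le_card_refl.
  - intro k; apply box_nowhere_dense_class_constant; [exact Kinf| |].
    + exists (fun k' => exist (V k) (delta k') (or_intror (ex_intro _ k' eq_refl))).
      intros a b E; apply delta_inj; exact (f_equal (@proj1_sig _ _) E).
    + apply le_lt_card_trans with (B := (sub (F k) + K -> bool)%type);
        [apply le_card_pow|apply SL, lt_card_sum_strong_limit; auto].
      apply le_card_rel with (R := fun (v : sub (V k)) (s : sub (F k) + K) => match s with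
        | inl a => exists Sv : S (proj1_sig v), proj1_sig a = j (exist _ (proj1_sig v) Sv)
        | inr k' => proj1_sig v = delta k' end).
      * intros [g [[Sg Fg]|[k' Hk']]]; simpl.
        -- exists (inl (exist _ (j (exist _ g Sg)) Fg)); exists Sg; reflexivity.
        -- exists (inr k'); exact Hk'.
      * intros [g Vg] [g' Vg'] [a|k'] Ha Ha'; apply sub_inj; simpl in *.
        -- destruct Ha as [Sg Ha], Ha' as [Sg' Ha']; rewrite Ha in Ha'.
           apply j_inj in Ha'; exact (f_equal (@proj1_sig _ _) Ha').
        -- congruence.
  - intros f Sf; destruct (cover (j (exist _ f Sf))) as [k Hk]; exists k.
    apply class_constant_self; left; exists Sf; exact Hk.
Qed.

Lemma strict_well_order_lex (A J M : Type) (ltJ : J -> J -> Prop) (ltM : M -> M -> Prop)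
  (p : A -> J) (q : A -> M) :
  strict_well_order ltJ -> strict_well_order ltM ->
  (forall a a', p a = p a' -> q a = q a' -> a = a') ->
  strict_well_order (fun a a' => ltJ (p a) (p a') \/ p a = p a' /\ ltM (q a) (q a')).
Proof.
  intros [wfJ totJ] [wfM totM] pq_inj; split.
  - assert (H : forall j m a, p a = j -> q a = m -> Acc (fun a a' =>
                  ltJ (p a) (p a') \/ p a = p a' /\ ltM (q a) (q a')) a).
    { intro j; induction j as [j IHj] using (well_founded_ind wfJ).
      intro m; induction m as [m IHm] using (well_founded_ind wfM).
      intros a <- <-; constructor; intros a' [H|[E H]].
      - exact (IHj _ H _ a' eq_refl eq_refl).
      - exact (IHm _ H a' E eq_refl). }
    intro a; exact (H _ _ a eq_refl eq_refl).
  - intros a a' na; destruct (classic (p a = p a')) as [E|nE].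
    + assert (q a <> q a') by (intro E'; exact (na (pq_inj a a' E E'))).
      destruct (totM _ _ H); [left|right]; right; auto.
    + destruct (totJ _ _ nE); [left|right]; left; auto.
Qed.

(* Order the union lexicographically by (a stage where a point appears, the point):
   every initial segment then lies inside a single [D j]. *)
Lemma le_card_chain_union (K M J : Type) (lt : J -> J -> Prop) (D : J -> set M) :
  strict_well_order lt -> (forall q j, lt q j -> forall x, D q x -> D j x) ->
  (forall j, ~ le_card K (sub (D j))) -> le_card (sub (fun x => exists j, D j x)) K.
Proof.
  intros Hlt mono small.
  pose (stage := fun a : sub (fun x => exists j, D j x) =>
                   proj1_sig (constructive_indefinite_description _ (proj2_sig a))).
  assert (Dstage : forall a, D (stage a) (proj1_sig a))
    by (intro a; exact (proj2_sig (constructive_indefinite_description _ (proj2_sig a)))).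
  destruct (strict_well_order_exists M) as [ltM HltM].
  destruct (le_card_or_segment _ K _ (strict_well_order_lex _ _ _ _ _ stage
              (@proj1_sig _ _) Hlt HltM (fun a a' _ => sub_inj _ a a')))
    as [H|[a Ha]]; [exact H|].
  exfalso; apply (small (stage a)); eapply le_card_trans; [exact Ha|].
  apply le_card_rel with (R := fun a' (y : sub (D (stage a))) =>
                                 proj1_sig y = proj1_sig (proj1_sig a')).
  - intros [a' Ha']; simpl.
    assert (Da' : D (stage a) (proj1_sig a')).
    { destruct Ha' as [H|[E _]]; [exact (mono _ _ H _ (Dstage a'))|rewrite <- E; apply Dstage]. }
    exists (exist _ _ Da'); reflexivity.
  - intros a1 a2 y E1 E2; apply sub_inj; apply (sub_inj (fun x => exists j, D j x)); exact (eq_trans (eq_sym E1) E2).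
Qed.

(* Restrict a well-order of [K] to the points with initial segment of size < [K]. *)
Lemma small_segment_well_order (K : Type) : exists (J : Type) (lt : J -> J -> Prop),
  strict_well_order lt /\ le_card K J /\ forall j, ~ le_card K (sub (segment lt j)).
Proof.
  destruct (strict_well_order_exists K) as [lt [wf tot]].
  pose (P := fun k => ~ le_card K (sub (segment lt k))).
  exists (sub P), (fun a b => lt (proj1_sig a) (proj1_sig b)); split; [split|split].
  - apply wf_inverse_image; exact wf.
  - intros a b nab; apply tot; intro E; exact (nab (sub_inj _ a b E)).
  - destruct (classic (forall k, P k)) as [Hall|Hn].
    + exists (fun k => exist P k (Hall k)); intros x y E; exact (f_equal (@proj1_sig _ _) E).
    + assert (Hmin : exists k0, ~ P k0 /\ forall q, lt q k0 -> P q).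
      { apply not_all_ex_not in Hn; destruct Hn as [k nPk]; revert nPk.
        induction k as [k IH] using (well_founded_ind wf); intro nPk.
        destruct (classic (forall q, lt q k -> P q)) as [Hq|Hq]; [eauto|].
        apply not_all_ex_not in Hq; destruct Hq as [q Hq]; apply imply_to_and in Hq.
        exact (IH q (proj1 Hq) (proj2 Hq)). }
      destruct Hmin as [k0 [nP0 Hk0]]; apply NNPP in nP0.
      eapply le_card_trans; [exact nP0|].
      exists (fun q => exist P (proj1_sig q) (Hk0 _ (proj2_sig q))).
      intros x y E; apply sub_inj; exact (f_equal (@proj1_sig _ _) E).
  - intros [j Pj] [f f_inj]; apply Pj.
    exists (fun k => exist (segment lt j) (proj1_sig (proj1_sig (f k))) (proj2_sig (f k))).
    intros x y E; apply f_inj, sub_inj, sub_inj; exact (f_equal (@proj1_sig _ _) E).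
Qed.

Definition pdom {M : Type} (t : set (M * bool)) : set M := fun x => exists b, t (x, b).

Definition functional {M : Type} (t : set (M * bool)) : Prop :=
  forall x b b', t (x, b) -> t (x, b') -> b = b'.

Definition extends {M : Type} (g : M -> bool) (t : set (M * bool)) : Prop :=
  forall x b, t (x, b) -> g x = b.

(* [[t]] meets the complement of the closure of [N] in some basic open set [[f|D']];
   the restriction of [f] to [pdom t ∪ D'] is the required extension. *)
Lemma extend_avoiding (K M : Type) (N : set (M -> bool)) (t : set (M * bool)) :
  regular_card K -> box_nowhere_dense K M N -> functional t -> ~ le_card K (sub (pdom t)) ->
  exists t', (forall z, t z -> t' z) /\ functional t' /\ ~ le_card K (sub (pdom t')) /\
             forall g, extends g t' -> ~ N g.
Proof.
  intros HK HN Ft St.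
  assert (Hopen : box_open K M (fun g => extends g t)).
  { intros f Hf; exists (pdom t); split; [exact (not_le_card_lt _ _ St)|].
    intros g Hg x b Hxb; rewrite (Hg x (ex_intro _ b Hxb)); exact (Hf x b Hxb). }
  assert (Ht : extends (fun x => dec (t (x, true))) t).
  { intros x [|] H; [apply dec_true; exact H|].
    apply dec_false; intro H'; discriminate (Ft x _ _ H H'). }
  assert (Hex : exists f, extends f t /\ ~ box_closure K M N f).
  { apply NNPP; intro H; apply (HN _ Hopen) with (f := fun x => dec (t (x, true))); [|exact Ht].
    intros f Hf; apply NNPP; intro; apply H; eauto. }
  destruct Hex as [f [Hf nCf]]; unfold box_closure in nCf.
  apply not_all_ex_not in nCf; destruct nCf as [W HW].
  apply imply_to_and in HW; destruct HW as [HWo HW].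
  apply imply_to_and in HW; destruct HW as [Wf WN].
  destruct (HWo f Wf) as [D' [HD' HD'W]].
  exists (fun z => (pdom t (fst z) \/ D' (fst z)) /\ snd z = f (fst z)); split; [|split; [|split]].
  - intros [x b] H; split; simpl; [left; exists b; exact H|symmetry; exact (Hf x b H)].
  - intros x b b' [_ H1] [_ H2]; simpl in *; congruence.
  - intro HK'; apply (regular_union_lt K bool M (fun b => if b then pdom t else D') HK).
    + apply lt_card_of_le_bool; [exact (proj1 HK)|apply le_card_refl].
    + intros [|]; [exact St|exact (proj2 HD')].
    + eapply le_card_trans; [exact HK'|apply le_card_sub].
      intros x [b [H _]]; simpl in H; destruct H; [exists true|exists false]; exact H.
  - intros g Hg Ng; apply WN; exists g; split; [|exact Ng].
    apply HD'W; intros x Dx; apply (Hg x (f x)); split; simpl; auto.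
Qed.

Lemma continuous_chain (J A : Type) (lt : J -> J -> Prop) (step : J -> set A -> set A -> Prop) :
  well_founded lt -> (forall j t, exists t', (forall z, t z -> t' z) /\ step j t t') ->
  exists s : J -> set A, forall j,
    (forall q z, lt q j -> s q z -> s j z) /\ step j (fun z => exists q, lt q j /\ s q z) (s j).
Proof.
  intros wf Hstep.
  pose (next := fun j t => proj1_sig (constructive_indefinite_description _ (Hstep j t))).
  pose (below := fun j (s : J -> set A) z => exists q, lt q j /\ s q z).
  destruct (wf_recursion J (set A) lt (fun _ => False) (fun j s => next j (below j s)) wf)
    as [s Hs].
  { intros j f g Hfg; f_equal; extensionality z; apply propositional_extensionality.
    split; intros [q [Hq H]]; exists q; split; auto; [rewrite <- Hfg|rewrite Hfg]; auto. }
  exists s; intro j; rewrite (Hs j).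
  destruct (proj2_sig (constructive_indefinite_description _ (Hstep j (below j s))))
    as [Hincl Hnext].
  split; [intros q z Hq Hz; apply Hincl; exists q; auto|exact Hnext].
Qed.

Lemma functional_chain_union (M J : Type) (lt : J -> J -> Prop) (s : J -> set (M * bool))
  (Q : J -> Prop) :
  (forall x y, x <> y -> lt x y \/ lt y x) -> (forall q j z, lt q j -> s q z -> s j z) ->
  (forall j, Q j -> functional (s j)) -> functional (fun z => exists j, Q j /\ s j z).
Proof.
  intros tot chain Fs x b b' [q [Qq Hq]] [j [Qj Hj]].
  destruct (classic (q = j)) as [<-|nqj]; [exact (Fs q Qq x b b' Hq Hj)|].
  destruct (tot q j nqj) as [H|H].
  - exact (Fs j Qj x b b' (chain q j _ H Hq) Hj).
  - exact (Fs q Qq x b b' Hq (chain j q _ H Hj)).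
Qed.

(* The extensions of [extend_avoiding] stacked along [lt]; the segments are small,
   so by regularity every limit stage still has a domain of size < [K]. *)
Lemma box_baire_well_order (K M J : Type) (lt : J -> J -> Prop) (N : J -> set (M -> bool)) :
  regular_card K -> strict_well_order lt -> (forall j, ~ le_card K (sub (segment lt j))) ->
  (forall j, box_nowhere_dense K M (N j)) ->
  exists s, functional s /\ le_card (sub (pdom s)) K /\
            forall g, extends g s -> forall j, ~ N j g.
Proof.
  intros HK [wf tot] seg_small HN.
  pose (good := fun t : set (M * bool) => functional t /\ ~ le_card K (sub (pdom t))).
  destruct (continuous_chain J (M * bool) lt
              (fun j t t' => good t -> good t' /\ forall g, extends g t' -> ~ N j g) wf)
    as [s Hs].
  { intros j t; destruct (classic (good t)) as [[Ft St]|nt].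
    - destruct (extend_avoiding K M (N j) t HK (HN j) Ft St) as [t' [H1 [H2 [H3 H4]]]].
      exists t'; split; [exact H1|intros _; split; [split|]; assumption].
    - exists t; split; [auto|intro; contradiction]. }
  assert (chain : forall q j z, lt q j -> s q z -> s j z) by (intros q j; apply Hs).
  assert (Hgood : forall j, good (s j) /\ forall g, extends g (s j) -> ~ N j g).
  { intro j; induction j as [j IH] using (well_founded_ind wf); apply (proj2 (Hs j)); split.
    - apply (functional_chain_union M J lt s (segment lt j) tot chain).
      intros q Hq; exact (proj1 (proj1 (IH q Hq))).
    - intro HKU.
      apply (regular_union_lt K (sub (segment lt j)) M (fun q => pdom (s (proj1_sig q))) HK).
      + exact (not_le_card_lt _ _ (seg_small j)).
      + intro q; exact (proj2 (proj1 (IH _ (proj2_sig q)))).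
      + eapply le_card_trans; [exact HKU|apply le_card_sub].
        intros x [b [q [Hq H]]]; exists (exist _ q Hq), b; exact H. }
  exists (fun z => exists j, True /\ s j z); split; [|split].
  - apply (functional_chain_union M J lt s _ tot chain); intros j _; apply Hgood.
  - eapply le_card_trans;
      [|apply (le_card_chain_union K M J lt (fun j => pdom (s j)) (conj wf tot))].
    + apply le_card_sub; intros x [b [j [_ H]]]; exists j, b; exact H.
    + intros q j Hqj x [b H]; exists b; exact (chain q j _ Hqj H).
    + intro j; exact (proj2 (proj1 (Hgood j))).
  - intros g Hg j; apply (proj2 (Hgood j)); intros x b H; apply Hg; exists j; auto.
Qed.

Lemma box_baire (K M I : Type) (N : I -> set (M -> bool)) :
  regular_card K -> le_card I K -> (forall i, box_nowhere_dense K M (N i)) ->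
  exists s, functional s /\ le_card (sub (pdom s)) K /\
            forall g, extends g s -> forall i, ~ N i g.
Proof.
  intros HK HI HN.
  destruct (small_segment_well_order K) as [J [lt [Hlt [HKJ seg_small]]]].
  destruct (le_card_trans _ _ _ HI HKJ) as [e e_inj].
  destruct (box_baire_well_order K M J lt (fun j g => exists i, e i = j /\ N i g)
              HK Hlt seg_small) as [s [Fs [Ds Hs]]].
  - intro j; destruct (classic (exists i, e i = j)) as [[i <-]|nj].
    + apply box_nowhere_dense_subset with (N' := N i); [|apply HN].
      intros g [i' [E Ng]]; rewrite <- (e_inj _ _ E); exact Ng.
    + apply box_nowhere_dense_subset with (N' := fun _ => False); [|apply box_nowhere_dense_empty].
      intros g [i [E _]]; exact (nj (ex_intro _ i E)).
  - exists s; split; [exact Fs|split; [exact Ds|]].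
    intros g Hg i Ni; exact (Hs g Hg (e i) (ex_intro _ i (conj eq_refl Ni))).
Qed.

Lemma le_card_of_surjection (A B : Type) (f : A -> B) :
  (forall b, exists a, f a = b) -> le_card B A.
Proof. intro f_surj; apply le_card_rel with (R := fun b a => f a = b); [exact f_surj|congruence]. Qed.

(* The witness is the set of functions [xi |-> (l ∈ Y_xi)] for [l] in [L]: by
   independence, every partial function with domain of size <= [K] (as produced by
   [box_baire]) is extended by one of them. *)
Lemma non_le_of_independent (K M L : Type) (X : set (set L)) :
  regular_card K -> inhabited L -> le_card M (sub X) -> independent_le K L X -> non_le K M L.
Proof.
  intros HK [l0] [t t_inj] Hind.
  pose (Y := fun xi => proj1_sig (t xi)).
  pose (point := fun l xi => dec (Y xi l)).
  exists (fun g => exists l, g = point l); split.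
  { apply le_card_rel with (R := fun g l => proj1_sig g = point l).
    - intros [g [l Hl]]; exists l; exact Hl.
    - intros g g' l E E'; apply sub_inj; congruence. }
  intros [I [N [HI [HN Hcover]]]].
  destruct (box_baire K M I N HK HI HN) as [s [Fs [Ds Hs]]].
  pose (A := fun b Z => exists xi, s (xi, b) /\ Z = Y xi).
  assert (AX : forall b Z, A b Z -> X Z) by (intros b Z [xi [_ ->]]; exact (proj2_sig (t xi))).
  assert (A_small : forall b, le_card (sub (A b)) K).
  { intro b; eapply le_card_trans; [|exact Ds].
    apply le_card_rel with (R := fun Z (x : sub (pdom s)) =>
                                   s (proj1_sig x, b) /\ proj1_sig Z = Y (proj1_sig x)).
    - intros [Z [xi [Hs' E]]]; exists (exist _ xi (ex_intro _ b Hs')); split; assumption.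
    - intros Z Z' x [_ E] [_ E']; apply sub_inj; exact (eq_trans E (eq_sym E')). }
  destruct (Hind (A true) (A false) (AX true) (AX false)) as [pick [_ pick_surj]];
    [|apply A_small|apply A_small|].
  { intros Z [xi [H1 ->]] [xi' [H2 E]].
    assert (xi = xi') as <- by (apply t_inj, sub_inj; exact E).
    discriminate (Fs _ _ _ H1 H2). }
  destruct (pick_surj l0) as [[l [InA NotB]] _].
  destruct (proj1 (Hcover (point l)) (ex_intro _ l eq_refl)) as [i Ni].
  refine (Hs (point l) _ i Ni); intros xi [|] H; unfold point.
  - apply dec_true, InA; exists xi; auto.
  - apply dec_false; intro Hl; apply NotB; exists (Y xi); split; [exists xi; auto|exact Hl].
Qed.

Theorem mainTheorem13 (K M : Type) :
  regular_card K -> lt_card K M -> cof_eq M K ->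
  ((forall L : Type, lt_card L (L -> bool) -> lt_card (L -> bool) M -> lt_non K M L)
   /\ (strong_limit M -> lt_non K M M))
  /\
  (forall L : Type, regular_card L -> lt_card K L -> lt_card L M -> le_card M (L -> bool) ->
     (exists X : set (set L),
        eq_card (sub X) M /\
        (forall Y, X Y -> eq_card (sub Y) L) /\
        independent_le K L X) ->
     non_le K M L).
Proof.
  intros HK HKM [HcofM _]; split; [split|].
  - intros L _ HLM; exact (lt_non_of_pow_lt K M L (proj1 HK) HKM HLM).
  - exact (lt_non_of_strong_limit K M (proj1 HK) HKM HcofM).
  - intros L [[e _] _] _ _ _ [X [[f [_ f_surj]] [_ Hind]]].
    exact (non_le_of_independent K M L X HK (inhabits (e 0))
             (le_card_of_surjection _ _ f f_surj) Hind).
Qed.
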